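(* Let $n\ge1$ and $f,g\in\Lambda_n$ with $f\ne0$ and $f\cdot g\in\mathrm{im}(\nu_{n-1/n})$. If $\mu(f)=0$ and $\lambda(f)<p^{n-1}$, then $g\in\mathrm{im}(\nu_{n-1/n})$.
   Context: Let $p$ be an odd prime. For $n\ge0$ let $G_n$ be a cyclic group of order $p^n$ with surjections $G_n\to G_{n-1}$, $\Lambda_n=\mathbf{Z}_p[G_n]$, $\widetilde\Lambda_n=\mathbf{F}_p[G_n]$ and $\widetilde I_n$ the augmentation ideal of $\widetilde\Lambda_n$. For nonzero $f\in\Lambda_n$, $\mu(f)$ is the unique integer with $f\in p^{\mu(f)}\Lambda_n\setminus p^{\mu(f)+1}\Lambda_n$, and $\lambda(f)$ is the unique integer such that the reduction mod $p$ of $p^{-\mu(f)}f$ lies in $\widetilde I_n^{\lambda(f)}\setminus\widetilde I_n^{\lambda(f)+1}$. $\nu_{n-1/n}:\Lambda_{n-1}\to\Lambda_n$ is the $\mathbf{Z}_p$-linear map with $\nu_{n-1/n}(\sigma)=\sum_{\tau\in G_n,\ \tau\mapsto\sigma}\tau$ for $\sigma\in G_{n-1}$. *)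

From mathcomp Require Import all_boot all_algebra.
Set Implicit Arguments. Unset Strict Implicit. Unset Printing Implicit Defensive.
Import GRing.Theory.

(* The p-adic integers Z_p, as coherent sequences of residues:        *)
(* x k is the residue mod p^k, with x (k+1) = x k (mod p^k).          *)
Definition coherent (p : nat) (x : nat -> nat) : Prop :=
  forall k, x k.+1 %% p ^ k = x k /\ x k %% p ^ k = x k.

Definition Zp (p : nat) := {x : nat -> nat | coherent p x}.

Lemma dvd_pk (p k : nat) : p ^ k %| p ^ k.+1.
Proof. by rewrite expnS dvdn_mull. Qed.

Lemma zp_nat_coh (p m : nat) : coherent p (fun k => m %% p ^ k).
Proof. by move=> k; rewrite modn_dvdm ?dvd_pk // modn_mod. Qed.

Definition zp_nat (p m : nat) : Zp p := exist _ _ (zp_nat_coh p m).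
Definition zp0 (p : nat) : Zp p := zp_nat p 0.

Lemma zp_add_coh (p : nat) (x y : Zp p) :
  coherent p (fun k => (sval x k + sval y k) %% p ^ k).
Proof.
case: x y => [x hx] [y hy] k /=; rewrite modn_mod; split=> //.
by rewrite modn_dvdm ?dvd_pk // -modnDm (hx k).1 (hy k).1.
Qed.

Lemma zp_mul_coh (p : nat) (x y : Zp p) :
  coherent p (fun k => (sval x k * sval y k) %% p ^ k).
Proof.
case: x y => [x hx] [y hy] k /=; rewrite modn_mod; split=> //.
by rewrite modn_dvdm ?dvd_pk // -modnMm (hx k).1 (hy k).1.
Qed.

Definition zp_add (p : nat) (x y : Zp p) : Zp p := exist _ _ (zp_add_coh x y).
Definition zp_mul (p : nat) (x y : Zp p) : Zp p := exist _ _ (zp_mul_coh x y).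

(* G_n = Z/p^n Z, modelled by 'I_(p^n) with addition mod p^n; the     *)
(* surjection G_n -> G_(n-1) is reduction mod p^(n-1).                *)
(* Lambda_n = Z_p[G_n]: functions G_n -> Z_p (coefficients).           *)
Definition Lam (p n : nat) := 'I_(p ^ n) -> Zp p.

Definition lam0 (p n : nat) : Lam p n := fun _ => zp0 p.

Definition lmul (p n : nat) (f g : Lam p n) : Lam p n := fun c =>
  \big[@zp_add p/zp0 p]_(a < p ^ n)
    \big[@zp_add p/zp0 p]_(b < p ^ n | (a + b) %% p ^ n == c)
      zp_mul (f a) (g b).

(* nu_{n-1/n} : Lambda_{n-1} -> Lambda_n, Z_p-linear extension of
   sigma |-> sum_{tau |-> sigma} tau; the coefficient of tau in nu h is
   the sum of h sigma over the sigma with tau |-> sigma. *)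
Definition nu (p n : nat) (h : Lam p n.-1) : Lam p n := fun t =>
  \big[@zp_add p/zp0 p]_(s < p ^ n.-1 | t %% p ^ n.-1 == s) h s.

Definition im_nu (p n : nat) (F : Lam p n) : Prop :=
  exists h : Lam p n.-1, forall t, F t = nu h t.

Definition in_pow_p (p n m : nat) (f : Lam p n) : Prop :=
  exists h : Lam p n, forall t, f t = zp_mul (zp_nat p (p ^ m)) (h t).

Definition mu_eq (p n : nat) (f : Lam p n) (m : nat) : Prop :=
  in_pow_p m f /\ ~ in_pow_p m.+1 f.

Definition FG (p n : nat) := {ffun 'I_(p ^ n) -> 'F_p}.

Definition fmul (p n : nat) (x y : FG p n) : FG p n := [ffun c : 'I_(p ^ n) =>
  (\sum_(a < p ^ n) \sum_(b < p ^ n | ((a + b) %% p ^ n)%N == c) x a * y b)%R].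

Definition aug (p n : nat) (x : FG p n) : bool := (\sum_t x t == 0)%R.

Fixpoint ipow (p n k : nat) (x : FG p n) {struct k} : Prop :=
  match k with
  | 0 => True
  | k'.+1 => exists s : seq (FG p n * FG p n),
      (forall ab, ab \in s -> aug ab.1 /\ ipow k' ab.2) /\
      x = (\sum_(ab <- s) fmul ab.1 ab.2)%R
  end.

Definition red (p n : nat) (f : Lam p n) : FG p n :=
  [ffun t => ((sval (f t)) 1)%:R]%R.

Definition lam_eq (p n : nat) (f : Lam p n) (l : nat) : Prop :=
  exists (m : nat) (f' : Lam p n), mu_eq f m /\
    (forall t, f t = zp_mul (zp_nat p (p ^ m)) (f' t)) /\
    ipow l (red f') /\ ~ ipow l.+1 (red f').

(* Modulo p^K, Lambda_n is (Z/p^K)[X]/(X^N - 1) with N = p^n, and im(nu) consists of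
   the elements fixed by multiplication by X^M, M = p^(n-1).  So for integer lifts F, G
   of f, g modulo p^K the hypothesis says (X^M - 1) F G lies in the ideal (p^K, X^N - 1)
   of Z[X].  Write X^N - 1 = (X^M - 1) Phi with Phi the p^n-th cyclotomic polynomial.
   After the substitution X -> X + 1, Phi is Eisenstein of degree e = N - M, while F
   becomes modulo p a polynomial of X-adic order lambda(f) < e: the augmentation ideal
   of F_p[G_n] is generated by X - 1, and (X - 1)^N = X^N - 1 in F_p[X].  Comparing
   X-adic orders modulo p and then the lowest relevant coefficient modulo p^2 shows
   that F R in (p^2, Phi) with deg R < e forces p | R.  This lets one cancel F at the
   cost of one power of p, giving (X^M - 1) G in (p^(K-1), X^N - 1): g is fixed by X^M
   modulo every power of p, i.e. g lies in im(nu). *)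

From Pilot Require Import Defs.
From mathcomp Require Import all_boot all_algebra zify ring.
From Stdlib Require Import ProofIrrelevance FunctionalExtensionality.
Set Implicit Arguments. Unset Strict Implicit. Unset Printing Implicit Defensive.
Import GRing.Theory Pdiv.Ring Pdiv.RingMonic.

Section PadicIntegers.
Variable p : nat.
Implicit Types x y : Defs.Zp p.

Lemma zp_ext x y : (forall k, sval x k = sval y k) -> x = y.
Proof.
case: x y => [x cx] [y cy] /= exy.
have e : x = y by apply: functional_extensionality.
by subst y; f_equal; apply: proof_irrelevance.
Qed.

Lemma zp_modn x k : sval x k %% p ^ k = sval x k.
Proof. exact: (proj2 (proj2_sig x k)). Qed.

Lemma zp_coherent x k j : k <= j -> sval x j %% p ^ k = sval x k.
Proof.
elim: j => [|j IH]; first by rewrite leqn0 => /eqP ->; apply: zp_modn.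
rewrite leq_eqVlt => /orP [/eqP -> | le_k_j]; first exact: zp_modn.
by rewrite -(IH le_k_j) -(proj1 (proj2_sig x j)) modn_dvdm ?dvdn_exp2l.
Qed.

Lemma zp_sum (I : Type) (r : seq I) (P : pred I) (F : I -> Defs.Zp p) (n : I -> nat) k :
  (forall i, sval (F i) k = n i %% p ^ k) ->
  sval (\big[@zp_add p/zp0 p]_(i <- r | P i) F i) k = (\sum_(i <- r | P i) n i) %% p ^ k.
Proof.
move=> Fn; apply: (big_ind2 (fun (x : Defs.Zp p) m => sval x k = m %% p ^ k)) => //.
by move=> x1 m1 x2 m2 /= -> ->; rewrite modnDm.
Qed.

Lemma zp_add0 x : zp_add x (zp0 p) = x.
Proof. by apply: zp_ext => k /=; rewrite mod0n addn0 zp_modn. Qed.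

Lemma zp_mul1 x : zp_mul (zp_nat p 1) x = x.
Proof. by apply: zp_ext => k /=; rewrite modnMml mul1n zp_modn. Qed.

Lemma in_pow_pW n (f : Lam p n) m1 m2 : m1 <= m2 -> in_pow_p m2 f -> in_pow_p m1 f.
Proof.
move=> le_m12 [h fE]; exists (fun t => zp_mul (zp_nat p (p ^ (m2 - m1))) (h t)) => t.
rewrite fE; apply: zp_ext => k /=; rewrite -{1}(subnKC le_m12) expnD.
move: (p ^ m1) (p ^ (m2 - m1)) (p ^ k) (sval (h t) k) => a c d b.
by rewrite modnMml [RHS]modnMml modnMmr mulnCA modnMml mulnCA mulnA.
Qed.

Lemma mu_eq_inj n (f : Lam p n) m1 m2 : mu_eq f m1 -> mu_eq f m2 -> m1 = m2.
Proof.
move=> [f_m1 f_m1S] [f_m2 f_m2S]; case: (ltngtP m1 m2) => // lt_m.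
  by case: (f_m1S (in_pow_pW lt_m f_m2)).
by case: (f_m2S (in_pow_pW lt_m f_m1)).
Qed.

End PadicIntegers.

Local Open Scope ring_scope.

(** * Group rings as truncated polynomial rings *)

Lemma rmodp_subE (R : nzRingType) (d P : {poly R}) :
  d \is monic -> rmodp P d = P - rdivp P d * d.
Proof. by move=> d_monic; rewrite {2}(rdivp_eq d_monic P) addrAC subrr add0r. Qed.

Section GroupRingPoly.
Variables (R : comNzRingType) (N : nat).
Implicit Types (F G : 'I_N -> R) (P : {poly R}).

(* The isomorphism R[Z/N] ~ R[X]/(X^N - 1), t |-> X^t. *)
Definition gpoly F : {poly R} := \sum_(t < N) F t *: 'X^t.

Definition conv F G (c : 'I_N) : R :=
  \sum_(a < N) \sum_(b < N | ((a + b) %% N)%N == c) F a * G b.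

Lemma coef_gpoly F i : (gpoly F)`_i = \sum_(t < N) F t * (i == t)%:R.
Proof. by rewrite coef_sum; apply: eq_bigr => t _; rewrite coefZ coefXn. Qed.

Lemma coef_gpoly_ord F (t : 'I_N) : (gpoly F)`_t = F t.
Proof.
rewrite coef_gpoly (bigD1 t) //= eqxx mulr1 big1 ?addr0 // => u ut.
by rewrite eq_sym (inj_eq val_inj) (negbTE ut) mulr0.
Qed.

Lemma coef_gpoly_ge F i : (N <= i)%N -> (gpoly F)`_i = 0.
Proof.
move=> Ni; rewrite coef_gpoly big1 // => t _.
by rewrite gtn_eqF ?mulr0 // (leq_trans (ltn_ord t) Ni).
Qed.

Lemma size_gpoly F : (size (gpoly F) <= N)%N.
Proof. by apply/leq_sizeP => i Ni; rewrite coef_gpoly_ge. Qed.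

Lemma gpoly_coef P : (size P <= N)%N -> gpoly (fun t => P`_t) = P.
Proof.
move=> sPN; apply/polyP => i; case: (ltnP i N) => iN.
  by rewrite (coef_gpoly_ord _ (Ordinal iN)).
by rewrite coef_gpoly_ge // nth_default // (leq_trans sPN).
Qed.

Lemma gpoly_inj F G : gpoly F = gpoly G -> F =1 G.
Proof. by move=> eFG t; rewrite -coef_gpoly_ord eFG coef_gpoly_ord. Qed.

Lemma gpolyB F G : gpoly (fun t => F t - G t) = gpoly F - gpoly G.
Proof. by rewrite -sumrB; apply: eq_bigr => t _; rewrite scalerBl. Qed.

Lemma gpoly_sum (I : Type) (r : seq I) (F : I -> 'I_N -> R) :
  gpoly (fun t => \sum_(i <- r) F i t) = \sum_(i <- r) gpoly (F i).
Proof. by rewrite exchange_big; apply: eq_bigr => t _; rewrite scaler_suml. Qed.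

Hypothesis N_gt0 : (0 < N)%N.

Let w : {poly R} := 'X^N - 1.

Lemma size_Xn_sub1 : size w = N.+1.
Proof. by rewrite /w -[1]polyC1 size_XnsubC. Qed.

Lemma monic_Xn_sub1 : w \is monic.
Proof. by rewrite /w -[1]polyC1 monicXnsubC. Qed.

Lemma rmodp_small P : (size P <= N)%N -> rmodp P w = P.
Proof.
move=> sPN; rewrite -[P in LHS]add0r -[0](mul0r w).
by rewrite rmodp_addl_mul_small ?monic_Xn_sub1 // size_Xn_sub1.
Qed.

Lemma rmodp_Xn m : rmodp 'X^m w = 'X^(m %% N).
Proof.
have mw := monic_Xn_sub1.
have rmodXN : rmodp 'X^N w = 1.
  rewrite -[X in rmodp X](subrK 1) -[_ - 1]mul1r.
  by rewrite rmodp_addl_mul_small ?size_Xn_sub1 ?size_poly1.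
rewrite {1}(divn_eq m N) exprD mulnC exprM -(rmodp_mulml mw) -(rmodpX mw).
by rewrite rmodXN expr1n rmodp_mulml // mul1r rmodp_small // size_polyXn ltn_pmod.
Qed.

Lemma gpoly_conv F G : gpoly (conv F G) = rmodp (gpoly F * gpoly G) w.
Proof.
have mw := monic_Xn_sub1.
have -> : gpoly F * gpoly G = \sum_(a < N) \sum_(b < N) (F a * G b) *: 'X^(a + b).
  rewrite mulr_suml; apply: eq_bigr => a _; rewrite mulr_sumr.
  by apply: eq_bigr => b _; rewrite -scalerAl -scalerAr scalerA exprD.
have -> : gpoly (conv F G) =
    \sum_(a < N) \sum_(b < N) (F a * G b) *: 'X^((a + b) %% N).
  rewrite /gpoly /conv; under eq_bigr do rewrite scaler_suml.
  rewrite exchange_big; apply: eq_bigr => a _.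
  under eq_bigr do rewrite scaler_suml big_mkcond.
  rewrite exchange_big; apply: eq_bigr => b _.
  pose c : 'I_N := Ordinal (ltn_pmod (a + b) N_gt0).
  rewrite (bigD1 c) //= eqxx big1 ?addr0 // => d /negbTE dc.
  by rewrite -val_eqE /= in dc; rewrite eq_sym dc.
rewrite rmodp_sum //; apply: eq_bigr => a _; rewrite rmodp_sum //.
by apply: eq_bigr => b _; rewrite rmodpZ // rmodp_Xn.
Qed.

End GroupRingPoly.

Section Rotation.
Variables (N M : nat) (R : comNzRingType).
Hypotheses (N_gt0 : (0 < N)%N) (leMN : (M <= N)%N).

Definition rot (s : 'I_N) : 'I_N := Ordinal (ltn_pmod (s + (N - M)) N_gt0).

Let unrot (s : 'I_N) : 'I_N := Ordinal (ltn_pmod (s + M) N_gt0).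

Let rotK s : rot (unrot s) = s.
Proof.
by apply: val_inj; rewrite /= modnDml -addnA subnKC // modnDr modn_small.
Qed.

Lemma val_rot (s : 'I_N) : (M <= s)%N -> val (rot s) = (s - M)%N.
Proof.
move=> leMs; have ltsN := ltn_ord s.
rewrite /= (_ : (s + (N - M) = s - M + N)%N); last by lia.
by rewrite modnDr modn_small //; lia.
Qed.

Lemma rot_modM (s : 'I_N) : (M %| N)%N -> (rot s %% M = s %% M)%N.
Proof.
move=> dvdMN; have /eqP NM_modM : ((N - M) %% M == 0)%N by rewrite -/(dvdn _ _) dvdn_sub.
by rewrite /= modn_dvdm // -modnDmr NM_modM addn0.
Qed.

Lemma gpoly_rot (H : 'I_N -> R) :
  gpoly (fun s => H (rot s)) = rmodp ('X^M * gpoly H) ('X^N - 1).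
Proof.
rewrite /gpoly mulr_sumr rmodp_sum ?monic_Xn_sub1 //.
rewrite (reindex_inj (can_inj rotK)); apply: eq_bigr => t _.
by rewrite rotK -scalerAr -exprD rmodpZ ?monic_Xn_sub1 // rmodp_Xn // addnC.
Qed.

End Rotation.

(** * Powers of the augmentation ideal *)

Section AugmentationIdeal.
Variables (p n : nat).
Hypothesis p_pr : prime p.
Local Notation N := (p ^ n)%N.
Implicit Types x y : FG p n.

Let N_gt0 : (0 < N)%N. Proof. by rewrite expn_gt0 prime_gt0. Qed.

Lemma Xsub1_expp j : ('X - 1 : {poly 'F_p}) ^+ (p ^ j) = 'X^(p ^ j) - 1.
Proof.
have pchar_p : p \in [pchar {poly 'F_p}] by rewrite pchar_poly pchar_Fp.
elim: j => [|j IH]; first by rewrite !expr1.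
rewrite expnSr !exprM IH.
by have := pFrobenius_autB_comm pchar_p (commr1 'X^(p ^ j)); rewrite !pFrobenius_autE expr1n.
Qed.

Lemma gpoly_fmul x y : gpoly (fmul x y) = rmodp (gpoly x * gpoly y) ('X^N - 1).
Proof. by rewrite -gpoly_conv //; apply: eq_bigr => t _; rewrite ffunE. Qed.

Lemma aug_root x : aug x = root (gpoly x) 1.
Proof.
rewrite /aug /root /gpoly horner_sum; congr (_ == 0).
by apply: eq_bigr => t _; rewrite hornerZ hornerXn expr1n mulr1.
Qed.

Lemma ipow_dvdp k x : (k <= N)%N -> ipow k x -> ('X - 1) ^+ k %| gpoly x.
Proof.
have w_monic := monic_Xn_sub1 'F_p N_gt0.
elim: k x => [|k IH] x leSkN; first by rewrite dvd1p.
move=> [s [sP ->]].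
have -> : gpoly (\sum_(ab <- s) fmul ab.1 ab.2) = \sum_(ab <- s) gpoly (fmul ab.1 ab.2).
  by rewrite -gpoly_sum; apply: eq_bigr => t _; rewrite sum_ffunE.
rewrite big_seq; apply: (big_ind (fun Q => ('X - 1) ^+ k.+1 %| Q)).
- exact: dvdp0.
- exact: dvdp_add.
move=> ab /sP [aug_a ipow_b]; rewrite gpoly_fmul rmodp_subE //; apply: dvdp_sub.
  by rewrite exprS dvdp_mul ?dvdp_XsubCl -?aug_root // IH // ltnW.
by rewrite -Xsub1_expp dvdp_mull // dvdp_exp2l.
Qed.

Lemma dvdp_ipow k x : (1 < N)%N -> (k <= N)%N -> ('X - 1) ^+ k %| gpoly x -> ipow k x.
Proof.
move=> ltN1; elim: k x => [//|k IH] x leSkN /dvdpP [Q xE].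
set B := Q * ('X - 1) ^+ k.
have size_B : (size B <= N)%N.
  have [B0 | B0] := eqVneq B 0; first by rewrite B0 size_poly0.
  have X1_neq0 : ('X - 1 : {poly 'F_p}) != 0 by rewrite -polyC1 polyXsubC_eq0.
  apply: leq_trans (size_gpoly x); rewrite xE exprS mulrCA -/B.
  by apply: dvdp_leq; [exact: mulf_neq0 | exact: dvdp_mull (dvdpp B)].
pose a : FG p n := [ffun t : 'I_N => ('X - 1 : {poly 'F_p})`_t].
pose b : FG p n := [ffun t : 'I_N => B`_t].
have gpoly_a : gpoly a = 'X - 1.
  rewrite -[RHS](gpoly_coef (N := N)) -?polyC1 ?size_XsubC //.
  by apply: eq_bigr => t _; rewrite ffunE.
have gpoly_b : gpoly b = B.
  by rewrite -[RHS](gpoly_coef size_B); apply: eq_bigr => t _; rewrite ffunE.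
have xB : gpoly x = ('X - 1) * B by rewrite xE exprS mulrCA.
exists [:: (a, b)]; split => [ab | ]; last first.
  rewrite big_seq1; apply/ffunP/gpoly_inj.
  by rewrite gpoly_fmul gpoly_a gpoly_b -xB rmodp_small ?size_gpoly.
rewrite mem_seq1 => /eqP -> /=; split.
  by rewrite aug_root gpoly_a -polyC1 root_XsubC.
by apply: IH; rewrite ?gpoly_b ?dvdp_mull // ltnW.
Qed.

Lemma ipow_mup l x : (1 < N)%N -> (l < N)%N -> ipow l x -> ~ ipow l.+1 x ->
  gpoly x != 0 /\ mup 1 (gpoly x) = l.
Proof.
move=> ltN1 lt_l_N /(ipow_dvdp (ltnW lt_l_N)) dvd_l ndvd_lS.
have ndvd : ~~ (('X - 1) ^+ l.+1 %| gpoly x) by apply/negP => /(dvdp_ipow ltN1 lt_l_N).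
have x0 : gpoly x != 0 by apply: contraNneq ndvd => ->; rewrite dvdp0.
by split=> //; apply/eqP; rewrite eqn_leq mup_leq ?mup_geq // polyC1 ndvd.
Qed.

End AugmentationIdeal.

(** * An Eisenstein-type cancellation *)

Section XadicOrder.
Variable K : fieldType.
Implicit Types P : {poly K}.

Lemma mup_poly0 (x : K) : mup x 0 = 0%N.
Proof. by rewrite /mup; case: arg_maxnP => //= -[[|i] //]; rewrite size_poly0. Qed.

Lemma mup0_geq P n : P != 0 -> (n <= mup 0 P)%N = ('X^n %| P).
Proof. by move=> P0; rewrite mup_geq // polyC0 subr0. Qed.

Lemma coef_lt_mup0 P i : (i < mup 0 P)%N -> P`_i = 0.
Proof.
have [-> _ | P0] := eqVneq P 0; first by rewrite coef0.
by rewrite mup0_geq // => /dvdpP [Q ->]; rewrite coefMXn ltnSn.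
Qed.

Lemma coef_mup0_neq0 P : P != 0 -> P`_(mup 0 P) != 0.
Proof.
move=> P0; apply/eqP => Pm0.
suff : ((mup 0 P).+1 <= mup 0 P)%N by rewrite ltnn.
rewrite mup0_geq //; apply/dvdpP; exists (drop_poly (mup 0 P).+1 P).
rewrite -[P in LHS](poly_take_drop (mup 0 P).+1).
suff -> : take_poly (mup 0 P).+1 P = 0 by rewrite add0r.
apply/polyP => i; rewrite coef_take_poly coef0; case: ltnP => // /[1!ltnS].
by rewrite leq_eqVlt => /orP [/eqP -> | /coef_lt_mup0].
Qed.

Lemma mup0_Xn e : mup 0 ('X^e : {poly K}) = e.
Proof. by have := mup_XsubCX e (0 : K) 0; rewrite polyC0 subr0 eqxx. Qed.

Lemma mup0_XnM P Q B e : P != 0 -> Q != 0 -> P * Q = 'X^e * B ->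
  B != 0 /\ (mup 0 P + mup 0 Q = e + mup 0 B)%N.
Proof.
move=> P0 Q0 E; have B0 : B != 0.
  by apply: contraNneq (mulf_neq0 P0 Q0) => B0; rewrite E B0 mulr0.
by split=> //; rewrite -mupM // E mupM ?mup0_Xn ?expf_neq0 ?polyX_eq0.
Qed.

End XadicOrder.

Lemma comp_polyXaddK (R : comNzRingType) (P : {poly R}) : (P \Po ('X + 1)) \Po ('X - 1) = P.
Proof.
by rewrite -comp_polyA comp_polyD comp_polyX comp_polyC subrK comp_polyXr.
Qed.

Lemma mup0_comp_XaddC (K : fieldType) (P : {poly K}) : mup 0 (P \Po ('X + 1)) = mup 1 P.
Proof.
have [-> | P0] := eqVneq P 0; first by rewrite comp_poly0 !mup_poly0.
have P10 : P \Po ('X + 1) != 0.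
  by apply: contraNneq P0 => P10; rewrite -[P]comp_polyXaddK P10 comp_poly0.
have dvdE n : ('X^n %| P \Po ('X + 1)) = (('X - 1%:P) ^+ n %| P).
  apply/idP/idP => dvdXP.
    by have := dvdp_comp_poly ('X - 1) dvdXP; rewrite comp_polyXaddK rmorphXn /= comp_polyX polyC1.
  have := dvdp_comp_poly ('X + 1) dvdXP.
  by rewrite rmorphXn /= comp_polyB comp_polyX comp_polyC addrK.
apply/eqP; rewrite eqn_leq; apply/andP; split.
  by rewrite mup_geq // -dvdE -mup0_geq.
by rewrite mup0_geq // dvdE -mup_geq.
Qed.

Lemma dvdz_coefM (P Q : {poly int}) (c : int) d :
  (forall k, (k <= d)%N -> (c %| P`_k * Q`_(d - k))%Z) -> (c %| (P * Q)`_d)%Z.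
Proof. by move=> cPQ; rewrite coefM; apply: rpred_sum => k _; apply: cPQ; rewrite -ltnS. Qed.

Section Eisenstein.
Variable p : nat.
Hypothesis p_pr : prime p.
Local Notation pi := (intr : int -> 'F_p).
Local Notation pip := (map_poly pi).

Lemma dvdz_pi (z : int) : (p%:Z %| z)%Z = (pi z == 0).
Proof. exact: (dvdz_pcharf (pchar_Fp p_pr)). Qed.

Lemma coef_pip (P : {poly int}) i : (pip P)`_i = pi P`_i.
Proof. exact: coef_map. Qed.

Lemma dvdz_coef_lt_mup0 (P : {poly int}) i : (i < mup 0 (pip P))%N -> (p%:Z %| P`_i)%Z.
Proof. by move=> lt_i; rewrite dvdz_pi -coef_pip coef_lt_mup0. Qed.

Lemma eisenstein_dvd (F R Phi A B : {poly int}) e :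
  pip F != 0 -> (mup 0 (pip F) < e)%N ->
  pip Phi = 'X^e -> Phi`_0 = p%:Z -> (size R <= e)%N ->
  F * R = (p%:Z ^+ 2)%:P * A + Phi * B -> pip R = 0.
Proof.
(* Modulo p, F R = X^e B, so B has X-adic order d = ord F + ord R - e, below both
   ord F and ord R.  At X^d the left side and (Phi - Phi_0) B are then divisible by p^2,
   which leaves p^2 | p B_d, whereas p does not divide B_d. *)
move=> F0 lt_l_e Phi_mod Phi0 size_R E; apply/eqP; apply/negPn/negP => R0.
have pi_p : pi p%:Z = 0 by apply/eqP; rewrite -dvdz_pi.
have Em : pip F * pip R = 'X^e * pip B.
  have := congr1 pip E; rewrite !(rmorphM, rmorphD) /= (map_polyC (intr : int -> _)).
  by rewrite [X in X%:P]pi_p polyC0 !mul0r add0r Phi_mod.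
have [B0 ord_eq] := mup0_XnM F0 R0 Em.
set d := mup 0 (pip B) in ord_eq.
have lt_j_e : (mup 0 (pip R) < e)%N.
  apply: leq_trans size_R; rewrite ltnNge; apply: contra (coef_mup0_neq0 R0) => le_R_j.
  by rewrite coef_pip nth_default.
have pF k : (k <= d)%N -> (p%:Z %| F`_k)%Z by move=> ?; apply: dvdz_coef_lt_mup0; lia.
have pR k : (k <= d)%N -> (p%:Z %| R`_k)%Z by move=> ?; apply: dvdz_coef_lt_mup0; lia.
have pB k : (k < d)%N -> (p%:Z %| B`_k)%Z by apply: dvdz_coef_lt_mup0.
have pPhi k : (0 < k <= d)%N -> (p%:Z %| Phi`_k)%Z.
  move=> /andP [k0 le_k_d]; rewrite dvdz_pi -coef_pip Phi_mod coefXn.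
  by rewrite (_ : (k == e) = false) //; apply/eqP; lia.
have pFR : (p%:Z ^+ 2 %| (F * R)`_d)%Z.
  by apply: dvdz_coefM => k le_k_d; rewrite expr2 dvdz_mul ?pF ?pR ?leq_subr.
have pPhiB : (p%:Z ^+ 2 %| ((Phi - (Phi`_0)%:P) * B)`_d)%Z.
  apply: dvdz_coefM => -[|k] le_k_d; first by rewrite coefB coefC subrr mul0r dvdz0.
  by rewrite coefB coefC subr0 expr2 dvdz_mul ?pPhi ?pB //; lia.
have pBd : (p%:Z ^+ 2 %| Phi`_0 * B`_d)%Z.
  have := congr1 (fun P : {poly int} => P`_d) E.
  rewrite /= -[Phi in Phi * B](subrK (Phi`_0)%:P) mulrDl !coefD !coefCM => Ed.
  have -> : Phi`_0 * B`_d = (F * R)`_d - p%:Z ^+ 2 * A`_d - ((Phi - (Phi`_0)%:P) * B)`_d.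
    by rewrite Ed; ring.
  by rewrite !rpredB // dvdz_mulr.
move: pBd; rewrite Phi0 expr2 dvdz_mul2l ?dvdz_pi -?coef_pip ?(negbTE (coef_mup0_neq0 B0)) //.
by rewrite eqz_nat -lt0n prime_gt0.
Qed.

End Eisenstein.

Section CyclotomicShift.
Variables p k : nat.
Hypothesis p_pr : prime p.
Local Notation M := (p ^ k)%N.
Local Notation N := (p ^ k.+1)%N.
Local Notation e := (p ^ k.+1 - p ^ k)%N.
Local Notation pip := (map_poly (intr : int -> 'F_p)).

(* The cyclotomic polynomial Phi_(p^(k+1)) = Phi_p(X^(p^k)). *)
Definition Phi : {poly int} := \sum_(i < p) 'X^M ^+ i.

Let M_gt0 : (0 < M)%N. Proof. by rewrite expn_gt0 prime_gt0. Qed.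
Let N_gt0 : (0 < N)%N. Proof. by rewrite expn_gt0 prime_gt0. Qed.

Lemma Xn_sub1_factor : 'X^N - 1 = ('X^M - 1) * Phi.
Proof. by rewrite /Phi expnSr exprM subrX1. Qed.

Lemma monic_Phi : Phi \is monic.
Proof.
by rewrite -(monicMl _ (monic_Xn_sub1 _ M_gt0)) -Xn_sub1_factor monic_Xn_sub1.
Qed.

Lemma size_Phi : size Phi = e.+1.
Proof.
have := congr1 (fun P : {poly int} => size P) Xn_sub1_factor.
rewrite /= size_monicM ?monic_Xn_sub1 ?monic_neq0 ?monic_Phi // !size_Xn_sub1 //.
have : (M <= N)%N by rewrite leq_pexp2l ?prime_gt0.
by move: (size Phi) M N => s m n; lia.
Qed.

Lemma comp_Xn_sub1_expp j : ('X^(p ^ j) - 1 : {poly 'F_p}) \Po ('X + 1) = 'X^(p ^ j).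
Proof.
by rewrite -Xsub1_expp // rmorphXn /= comp_polyB comp_polyX comp_polyC addrK.
Qed.

Lemma pip_Phi_shift : pip (Phi \Po ('X + 1)) = 'X^e.
Proof.
apply: (@mulfI _ 'X^M); first by rewrite monic_neq0 ?monicXn.
rewrite -exprD subnKC ?leq_pexp2l ?prime_gt0 //.
rewrite -{1}(comp_Xn_sub1_expp k) -(comp_Xn_sub1_expp k.+1) map_comp_poly /=.
rewrite [map_poly _ (_ + _)]rmorphD /= map_polyX rmorph1 -comp_polyM; congr (_ \Po _).
by have := congr1 pip Xn_sub1_factor; rewrite rmorphM !rmorphB /= !map_polyXn !rmorph1.
Qed.

Lemma Phi_shift_coef0 : (Phi \Po ('X + 1))`_0 = p%:Z.
Proof.
rewrite -horner_coef0 horner_comp hornerD hornerX hornerC add0r /Phi horner_sum.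
under eq_bigr do rewrite -exprM hornerXn expr1n.
by rewrite sumr_const card_ord natz.
Qed.

End CyclotomicShift.

(** * Cancelling f modulo (p^j, X^N - 1) *)

Lemma dvdz_coef_polyCM (c : int) (P : {poly int}) :
  (forall i, (c %| P`_i)%Z) -> exists Q, P = c%:P * Q.
Proof.
move=> cP; exists (\poly_(i < size P) (P`_i %/ c)%Z); apply/polyP => i.
rewrite coefCM coef_poly; case: ltnP => iP; first by rewrite mulrC divzK.
by rewrite mulr0 nth_default.
Qed.

Lemma monic_polyCM_cancel (d Q A : {poly int}) (c : int) :
  d \is monic -> d * Q = c%:P * A -> exists Q' : {poly int}, Q = c%:P * Q'.
Proof.
move=> d_monic E; have d0 := monic_neq0 d_monic.
have [c0 | c0] := eqVneq c 0.
  by exists 0; apply/eqP; move: E; rewrite c0 mul0r mulr0 => /eqP; rewrite mulf_eq0 (negbTE d0).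
exists (rdivp A d); apply/eqP; rewrite -subr_eq0.
have E2 : d * (Q - c%:P * rdivp A d) = c%:P * rmodp A d.
  by rewrite mulrBr E {1}(rdivp_eq d_monic A); ring.
apply: contraTT (ltn_rmodpN0 A d0) => X0.
rewrite -leqNgt -(size_Cmul (rmodp A d) c0) -E2 size_monicM //.
by rewrite -size_poly_gt0 in X0; rewrite -subn1 -addnBA // leq_addr.
Qed.

Lemma map_comp_XaddC (R S : comNzRingType) (f : {rmorphism R -> S}) (P : {poly R}) :
  map_poly f (P \Po ('X + 1)) = map_poly f P \Po ('X + 1).
Proof. by rewrite map_comp_poly rmorphD /= map_polyX rmorph1. Qed.

Section IdealCancellation.
Variables p k : nat.
Hypothesis p_pr : prime p.
Local Notation M := (p ^ k)%N.
Local Notation N := (p ^ k.+1)%N.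
Local Notation e := (p ^ k.+1 - p ^ k)%N.
Local Notation pip := (map_poly (intr : int -> 'F_p)).
Local Notation cp := ((p%:Z)%:P : {poly int}).
Local Notation D := ('X^M - 1 : {poly int}).
Local Notation w := ('X^N - 1 : {poly int}).

Definition pw_ideal (j : nat) (P : {poly int}) : Prop :=
  exists A B : {poly int}, P = cp ^+ j * A + w * B.

Let N_gt0 : (0 < N)%N. Proof. by rewrite expn_gt0 prime_gt0. Qed.
Let w_monic : w \is monic. Proof. exact: monic_Xn_sub1. Qed.
Let D_monic : D \is monic. Proof. by apply: monic_Xn_sub1; rewrite expn_gt0 prime_gt0. Qed.

Let cp_neq0 j : cp ^+ j != 0.
Proof. by rewrite expf_neq0 // polyC_eq0 eqz_nat -lt0n prime_gt0. Qed.

Let cpX j : cp ^+ j = (p%:Z ^+ j)%:P.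
Proof. by rewrite rmorphXn. Qed.

Lemma pw_idealS j P : pw_ideal j.+1 P -> pw_ideal j P.
Proof. by move=> [A [B ->]]; exists (cp * A), B; rewrite exprSr mulrA. Qed.

Lemma pw_ideal_cancel_pexp i j X : pw_ideal (j + i) (cp ^+ j * X) -> pw_ideal i X.
Proof.
move=> [A [B E]].
have [B' EB] : exists B' : {poly int}, B = (p%:Z ^+ j)%:P * B'.
  apply: (monic_polyCM_cancel (A := X - cp ^+ i * A) w_monic).
  by rewrite -cpX mulrBr E exprD; ring.
rewrite -cpX in EB.
exists A, B'; apply: (mulfI (cp_neq0 j)); rewrite E EB exprD; ring.
Qed.

Lemma pw_ideal_small j (P : {poly int}) :
  (size P <= N)%N -> pw_ideal j P -> exists Q, P = cp ^+ j * Q.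
Proof.
move=> size_P [A [B E]]; exists (rmodp A w).
rewrite -(rmodp_small N_gt0 size_P) E rmodpD // (mulrC _ B) rmodp_mull // addr0.
by rewrite cpX !mul_polyC rmodpZ.
Qed.

Variable F : {poly int}.
Hypotheses (F0 : pip F != 0) (ordF : (mup 1 (pip F) < e)%N).

Lemma pw_ideal_cancelF2 Q : pw_ideal 2 (F * D * Q) -> pw_ideal 1 (D * Q).
Proof.
move=> [A [B E]].
have [A' EA'] : exists A' : {poly int}, F * Q - Phi p k * B = (p%:Z ^+ 2)%:P * A'.
  apply: (monic_polyCM_cancel (A := A) D_monic).
  by rewrite -cpX mulrBr mulrA (mulrC _ F) E Xn_sub1_factor; ring.
have Phi_monic := monic_Phi k p_pr.
set S := rdivp Q (Phi p k); set R := rmodp Q (Phi p k).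
have EQ : Q = S * Phi p k + R := rdivp_eq Phi_monic Q.
have size_R : (size R <= e)%N.
  by rewrite -ltnS -(size_Phi k p_pr) ltn_rmodpN0 // monic_neq0.
have ER : F * R = (p%:Z ^+ 2)%:P * A' + Phi p k * (B - F * S).
  by rewrite -EA' {1}EQ; ring.
have ER1 := congr1 (comp_poly ('X + 1)) ER.
rewrite comp_polyD !comp_polyM comp_polyC in ER1.
have R0 : pip (R \Po ('X + 1)) = 0.
  apply: (eisenstein_dvd p_pr _ _ _ _ _ ER1).
  - rewrite map_comp_XaddC; apply: contraNneq F0 => /(congr1 (comp_poly ('X - 1))).
    by rewrite comp_polyXaddK comp_poly0 => ->.
  - by rewrite map_comp_XaddC mup0_comp_XaddC; exact: ordF.
  - exact: pip_Phi_shift.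
  - exact: Phi_shift_coef0.
  - by rewrite size_comp_poly2 // -polyC1 size_XaddC.
have [R' ER'] : exists R' : {poly int}, R \Po ('X + 1) = (p%:Z)%:P * R'.
  by apply: dvdz_coef_polyCM => i; rewrite dvdz_pi // -coef_pip R0 coef0.
exists (D * (R' \Po ('X - 1))), S.
rewrite {1}EQ -(comp_polyXaddK R) ER' comp_polyM comp_polyC expr1 Xn_sub1_factor; ring.
Qed.

Lemma pw_ideal_cancelF j G : pw_ideal j.+1 (F * D * G) -> pw_ideal j (D * G).
Proof.
elim: j G => [|j IH] G FDG; first by exists (D * G), 0; rewrite mul1r mulr0 addr0.
have [A1 [B1 EG]] := IH G (pw_idealS FDG).
have [Q EQ] : exists Q : {poly int}, G - Phi p k * B1 = (p%:Z ^+ j)%:P * Q.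
  apply: (monic_polyCM_cancel (A := A1) D_monic).
  by rewrite -cpX mulrBr EG Xn_sub1_factor; ring.
rewrite -cpX in EQ.
have : pw_ideal (j + 2) (cp ^+ j * (F * D * Q)).
  have [A [B EFDG]] := FDG; exists A, (B - F * B1).
  have -> : cp ^+ j * (F * D * Q) = F * D * (cp ^+ j * Q) by ring.
  by rewrite -EQ mulrBr EFDG Xn_sub1_factor addn2; ring.
move=> /pw_ideal_cancel_pexp /pw_ideal_cancelF2 [A2 [B2 EDQ]].
exists A2, (B1 + cp ^+ j * B2).
have -> : G = cp ^+ j * Q + Phi p k * B1 by rewrite -EQ subrK.
by rewrite mulrDr (mulrCA _ _ Q) EDQ mulrA -Xn_sub1_factor (exprSr _ j) expr1; ring.
Qed.

End IdealCancellation.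

(** * The image of nu *)

Lemma dvdz_sub_eqmod (m a b : nat) :
  (m%:Z %| a%:Z - b%:Z)%Z = (a == b %[mod m])%N.
Proof. by rewrite -eqz_mod_dvd /= !modz_nat eqz_nat. Qed.

Lemma PoszX (m n : nat) : (m ^ n)%N%:Z = m%:Z ^+ n.
Proof. by rewrite -[LHS]natz natrX natz. Qed.

Section ImageOfNu.
Variables p k : nat.
Hypothesis p_pr : prime p.
Local Notation M := (p ^ k)%N.
Local Notation N := (p ^ k.+1)%N.

Let N_gt0 : (0 < N)%N. Proof. by rewrite expn_gt0 prime_gt0. Qed.
Let M_gt0 : (0 < M)%N. Proof. by rewrite expn_gt0 prime_gt0. Qed.
Let leMN : (M <= N)%N. Proof. by rewrite leq_pexp2l ?prime_gt0. Qed.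
Let dvdMN : (M %| N)%N. Proof. by rewrite dvdn_exp2l. Qed.

Local Notation rot := (rot M N_gt0).
Local Notation pip := (map_poly (intr : int -> 'F_p)).

Lemma im_nu_rot (F : Lam p k.+1) s : im_nu F -> F (rot s) = F s.
Proof. by case=> h Fh; rewrite !Fh; apply: eq_bigl => s'; rewrite /= rot_modM. Qed.

Lemma rot_im_nu (F : Lam p k.+1) : (forall s, F (rot s) = F s) -> im_nu F.
Proof.
move=> Frot.
have Fmod m (t : 'I_N) : (t < m)%N -> F t = F (widen_ord leMN (Ordinal (ltn_pmod t M_gt0))).
  elim: m t => [//|m IH] t lt_t_m.
  have [lt_t_M | le_M_t] := ltnP t M.
    by congr F; apply: val_inj; rewrite /= modn_small.
  rewrite -Frot IH; last by rewrite val_rot //; lia.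
  by congr F; apply: val_inj; rewrite /= rot_modM.
exists (fun s => F (widen_ord leMN s)) => t.
rewrite /Defs.nu /= (@big_pred1_id _ (@zp_add p) (zp0 p) _ (Ordinal (ltn_pmod t M_gt0))).
  by rewrite zp_add0 (Fmod t.+1).
by move=> s; rewrite /= /pred1 /= -val_eqE /= eq_sym.
Qed.

Definition zlift (x : Lam p k.+1) (K : nat) (t : 'I_N) : int := (sval (x t) K)%:Z.

Lemma pip_zlift x K : (0 < K)%N -> pip (gpoly (zlift x K)) = gpoly (red x).
Proof.
move=> K_gt0; apply/polyP => i; rewrite coef_map /=.
have [lt_i_N | le_N_i] := ltnP i N; last by rewrite !coef_gpoly_ge.
rewrite (coef_gpoly_ord _ (Ordinal lt_i_N)) (coef_gpoly_ord _ (Ordinal lt_i_N)) ffunE.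
by rewrite /zlift -(zp_coherent _ K_gt0) expn1 (Fp_nat_mod p_pr).
Qed.

Variables f g : Lam p k.+1.

Let convn K (c : 'I_N) : nat :=
  (\sum_(a < N) \sum_(b < N | (a + b) %% N == c) sval (f a) K * sval (g b) K)%N.

Let conv_zlift K c : conv (zlift f K) (zlift g K) c = (convn K c)%:Z.
Proof.
rewrite /conv /convn -natz natr_sum; apply: eq_bigr => a _.
by rewrite natr_sum; apply: eq_bigr => b _; rewrite natrM !natz.
Qed.

Let sval_lmul K c : sval (lmul f g c) K = (convn K c %% p ^ K)%N.
Proof. by apply: zp_sum => a; apply: zp_sum. Qed.

Hypothesis fg_im : im_nu (lmul f g).

Lemma pw_ideal_level K :
  pw_ideal p k K (gpoly (zlift f K) * ('X^M - 1) * gpoly (zlift g K)).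
Proof.
set F := gpoly (zlift f K); set G := gpoly (zlift g K).
set C := conv (zlift f K) (zlift g K).
have [Z EZ] : exists Z : {poly int}, gpoly (fun s => C (rot s) - C s) = (p%:Z ^+ K)%:P * Z.
  apply: dvdz_coef_polyCM => i; have [lt_i_N | le_N_i] := ltnP i N; last first.
    by rewrite coef_gpoly_ge.
  rewrite (coef_gpoly_ord _ (Ordinal lt_i_N)) /C !conv_zlift -PoszX dvdz_sub_eqmod.
  by rewrite -!sval_lmul im_nu_rot.
have w_monic := monic_Xn_sub1 int N_gt0.
have EFG := rdivp_eq w_monic (F * G); rewrite -gpoly_conv // -/C in EFG.
have EC : gpoly (fun s => C (rot s)) =
    'X^M * gpoly C - rdivp ('X^M * gpoly C) ('X^N - 1) * ('X^N - 1).
  by rewrite (gpoly_rot _ leMN) rmodp_subE.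
rewrite gpolyB rmorphXn EC in EZ.
exists Z, (rdivp ('X^M * gpoly C) ('X^N - 1) + ('X^M - 1) * rdivp (F * G) ('X^N - 1)).
set q1 := rdivp (F * G) _; set q2 := rdivp ('X^M * gpoly C) _.
by rewrite mulrAC EFG -EZ; ring.
Qed.

Hypotheses (f0 : gpoly (red f) != 0)
           (ord_f : (mup 1 (gpoly (red f)) < p ^ k.+1 - p ^ k)%N).

Lemma rot_invariant s : g (rot s) = g s.
Proof.
apply: zp_ext => j.
have F0 : pip (gpoly (zlift f j.+1)) != 0 by rewrite pip_zlift.
have ordF : (mup 1 (pip (gpoly (zlift f j.+1))) < p ^ k.+1 - p ^ k)%N.
  by rewrite pip_zlift.
have [A [B EDG]] := pw_ideal_cancelF p_pr F0 ordF (pw_ideal_level j.+1).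
set G := gpoly (zlift g j.+1) in EDG.
have : pw_ideal p k j (gpoly (fun s => zlift g j.+1 (rot s) - zlift g j.+1 s)).
  exists A, (B - rdivp ('X^M * G) ('X^N - 1)).
  rewrite gpolyB (gpoly_rot _ leMN) rmodp_subE ?monic_Xn_sub1 // -/G.
  set q := rdivp _ _; rewrite (_ : 'X^M * G = ('X^M - 1) * G + G); last by ring.
  by rewrite EDG; ring.
move=> /(pw_ideal_small p_pr (size_gpoly _)) [Q].
move=> /(congr1 (fun P : {poly int} => P`_s)); rewrite coef_gpoly_ord -rmorphXn coefCM => Es.
have : (p%:Z ^+ j %| zlift g j.+1 (rot s) - zlift g j.+1 s)%Z by rewrite Es dvdz_mulr.
by rewrite -PoszX dvdz_sub_eqmod => /eqP; rewrite !zp_coherent.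
Qed.

Lemma im_nu_of_lmul : im_nu g.
Proof. exact/rot_im_nu/rot_invariant. Qed.

End ImageOfNu.

Local Close Scope ring_scope.

Theorem lemma4p10 (p n : nat) (f g : Lam p n) :
  prime p -> odd p -> 1 <= n ->
  f <> @lam0 p n ->
  im_nu (lmul f g) ->
  mu_eq f 0 ->
  (exists l, lam_eq f l /\ l < p ^ n.-1) ->
  im_nu g.
Proof.
move=> p_pr _ n_gt0 _ fg_im mu_f [l [[m [f' [mu_m [fE [ipow_l nipow_l]]]]] lt_l]].
case: n n_gt0 f g f' fg_im mu_f mu_m fE ipow_l nipow_l lt_l => [//|k] _ f g f' fg_im mu_f mu_m fE.
have m0 := mu_eq_inj mu_m mu_f; subst m.
have -> : f' = f by apply: functional_extensionality => t; rewrite fE zp_mul1.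
move=> ipow_l nipow_l /= lt_l_M.
have lt_M_N : p ^ k < p ^ k.+1 by rewrite ltn_exp2l ?prime_gt1.
have lt1N : 1 < p ^ k.+1.
  by rewrite (leq_trans (prime_gt1 p_pr)) // expnS leq_pmulr ?expn_gt0 ?prime_gt0.
have le_M_e : p ^ k <= p ^ k.+1 - p ^ k.
  by rewrite expnS -{3}(mul1n (p ^ k)) -mulnBl leq_pmull ?subn_gt0 ?prime_gt1.
have [f0 ord_f] := ipow_mup p_pr lt1N (ltn_trans lt_l_M lt_M_N) ipow_l nipow_l.
by apply: (im_nu_of_lmul p_pr fg_im) => //; rewrite ord_f (leq_trans lt_l_M).
Qed.
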